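(* Let $-1<r<1$ and $\nu=3$ (sample size $n=4$). The posterior density of the scale-invariant slope under the Cauchy prior, $$p(\tilde\beta\mid y)=\frac{p_C(\tilde\beta)J(\tilde\beta,3,r,1)}{\int_{-\infty}^\infty p_C(x)J(x,3,r,1)\,dx},\qquad p_C(x)=\frac1\pi\frac1{1+x^2},$$ equals $$p(\tilde\beta\mid y)=K(r)\,\frac{1}{1+\tilde\beta^2}\cdot\frac{|\tilde\beta|}{\tilde\beta^2-2r\tilde\beta+1},\qquad K(r)={}_2F_1(1,1;\tfrac32;r^2)^{-1}=\frac{r\sqrt{1-r^2}}{\arcsin r}\ (r\ne0),\quad K(0)=1.$$
   Context: Functions: $p_t(t;\nu)$ Student $t$ density; $P_F(x;\nu_1,\nu_2)$ $F$ distribution function; for $\nu>1$, $-1<r<1$, $\tilde\beta>0$: $t_-(\nu,r)=-\sqrt{\nu}\,r/\sqrt{1-r^2}$, $t_+(\tilde\beta,\nu,r)=\sqrt{\nu}(\tilde\beta-r)/\sqrt{1-r^2}$, $F(t,\tilde\beta,\nu,r)=\frac{\nu-1}{\nu+1}\frac{\nu+t^2}{[t_+-t_-]^2-[t-t_-]^2}$, $I(\tilde\beta,\nu,r)=\int_{t_-}^{t_+}p_t(t;\nu)P_F(F(t,\tilde\beta,\nu,r);\nu+1,\nu-1)\,dt$, and for $\beta\ne0$, $l>0$: $J(\beta,\nu,r,l)=I(|\beta|/l,\nu,r\,\mathrm{sign}\beta)+I(l/|\beta|,\nu,r\,\mathrm{sign}\beta)$. ${}_2F_1$ is the Gauss hypergeometric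 function. The posterior of $\beta$ is $p(\tilde\beta\mid y)/l$ with $\tilde\beta=\beta/l$. *)

From Stdlib Require Import Reals Ratan ClassicalEpsilon.
Open Scope R_scope.

Definition integrable_on (f : R -> R) (a b : R) : Prop :=
  inhabited (Riemann_integrable f a b).

(* Value of the (proper) Riemann integral; RiemannInt is proof-irrelevant. *)
Definition RInt (f : R -> R) (a b : R) : R :=
  epsilon (inhabits 0) (fun v => exists pr : Riemann_integrable f a b, RiemannInt pr = v).

Definition is_improper_int_open (f : R -> R) (a b l : R) : Prop :=
  forall eps, 0 < eps -> exists d, 0 < d /\
    forall u v, a < u < a + d -> b - d < v < b ->
      integrable_on f u v /\ Rabs (RInt f u v - l) < eps.

Definition is_improper_int_0inf (f : R -> R) (l : R) : Prop :=
  forall eps, 0 < eps -> exists d M, 0 < d /\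
    forall u v, 0 < u < d -> M < v ->
      integrable_on f u v /\ Rabs (RInt f u v - l) < eps.

Definition is_improper_int_R (f : R -> R) (l : R) : Prop :=
  forall eps, 0 < eps -> exists M,
    forall u v, u < - M -> M < v ->
      integrable_on f u v /\ Rabs (RInt f u v - l) < eps.

Definition Gamma (x : R) : R :=
  epsilon (inhabits 0)
    (is_improper_int_0inf (fun t => Rpower t (x - 1) * exp (- t))).

Definition Beta (a b : R) : R := Gamma a * Gamma b / Gamma (a + b).

Definition p_t (t nu : R) : R :=
  Gamma ((nu + 1) / 2) / (sqrt (nu * PI) * Gamma (nu / 2))
  * Rpower (1 + t ^ 2 / nu) (- (nu + 1) / 2).

Definition F_pdf (d1 d2 s : R) : R :=
  / Beta (d1 / 2) (d2 / 2) * Rpower (d1 / d2) (d1 / 2)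
  * Rpower s (d1 / 2 - 1) * Rpower (1 + d1 * s / d2) (- (d1 + d2) / 2).

Definition P_F (x d1 d2 : R) : R :=
  if Rle_dec x 0 then 0
  else epsilon (inhabits 0) (is_improper_int_open (F_pdf d1 d2) 0 x).

Definition p_C (x : R) : R := / PI * / (1 + x ^ 2).

Definition t_minus (nu r : R) : R := - sqrt nu * r / sqrt (1 - r ^ 2).
Definition t_plus (bt nu r : R) : R := sqrt nu * (bt - r) / sqrt (1 - r ^ 2).

Definition Fstat (t bt nu r : R) : R :=
  (nu - 1) / (nu + 1) * (nu + t ^ 2)
  / ((t_plus bt nu r - t_minus nu r) ^ 2 - (t - t_minus nu r) ^ 2).

Definition I_fun (bt nu r : R) : R :=
  RInt (fun t => p_t t nu * P_F (Fstat t bt nu r) (nu + 1) (nu - 1))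
       (t_minus nu r) (t_plus bt nu r).

Definition sgn (x : R) : R :=
  if Rlt_dec 0 x then 1 else if Rlt_dec x 0 then -1 else 0.

Definition J_fun (b nu r l : R) : R :=
  I_fun (Rabs b / l) nu (r * sgn b) + I_fun (l / Rabs b) nu (r * sgn b).

Fixpoint poch (a : R) (n : nat) : R :=
  match n with O => 1 | S k => poch a k * (a + INR k) end.

Definition hyp2F1_term (a b c z : R) (n : nat) : R :=
  poch a n * poch b n / poch c n * z ^ n / INR (Factorial.fact n).

(* For nu = 3 every ingredient of J is elementary: the Student t density is
   c_t / (1 + t^2/3)^2 and the F(4,2) distribution function is c_F x^2 / (1 + 2x)^2.
   Writing t_- = -m rho, t_+ = m (bt - rho) with m = sqrt 3 / sqrt (1 - rho^2), the
   denominator D of the F statistic satisfies D + 3 + t^2 = al + be t (affine in t),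
   so the integrand of I is a constant over (al + be t)^2 and
       I(bt,3,rho) = K bt / ((bt^2 + 1)(bt^2 - 2 rho bt + 1)),
       J(b,3,r,1)  = K |b| / (b^2 - 2 r b + 1),   K = J_const r > 0
   (positivity of K comes from Gamma > 0 on [1,3]).  The normalizing integral of
   p_C J is computed from explicit antiderivatives (partial fractions and arctangents)
   and equals (K / PI) A(r) with A(r) = atan (r / sqrt (1 - r^2)) / (r sqrt (1 - r^2)),
   A(0) = 1.  Independently, 2F1(1,1;3/2;z) = sum z^n int_0^1 (1-u^2)^n du
   = int_0^1 du / (1 - z (1 - u^2)), which at z = r^2 is again A(r), and
   asin r = atan (r / sqrt (1 - r^2)). *)

From Pilot Require Import Defs.
From Stdlib Require Import Reals Ratan ClassicalEpsilon.
From Stdlib Require Import Lra Lia.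
From Coquelicot Require Import Coquelicot.
Open Scope R_scope.

Lemma is_RInt_Defs (f : R -> R) (a b l : R) :
  is_RInt f a b l -> integrable_on f a b /\ Defs.RInt f a b = l.
Proof.
  intro H.
  assert (pr : Riemann_integrable f a b) by (apply ex_RInt_Reals_0; exists l; exact H).
  split; [exact (inhabits pr)|].
  unfold Defs.RInt.
  destruct (epsilon_spec (inhabits 0)
              (fun v => exists pr : Riemann_integrable f a b, RiemannInt pr = v))
    as [pr' Hpr']; [exists (RiemannInt pr); exists pr; reflexivity|].
  rewrite <- Hpr', <- RInt_Reals. now apply is_RInt_unique.
Qed.

Lemma is_RInt_antiderivative (F f : R -> R) (a b : R) :
  (forall x, Rmin a b <= x <= Rmax a b -> is_derive F x (f x)) ->
  (forall x, Rmin a b <= x <= Rmax a b -> continuous f x) ->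
  is_RInt f a b (F b - F a).
Proof. intros HF Hf; exact (is_RInt_derive F f a b HF Hf). Qed.

Lemma eq_of_common_approximations (l1 l2 : R) :
  (forall eps, 0 < eps -> exists y, Rabs (y - l1) < eps /\ Rabs (y - l2) < eps) ->
  l1 = l2.
Proof.
  intro H. destruct (Req_dec l1 l2) as [|Hne]; [assumption|exfalso].
  assert (Hd : 0 < Rabs (l1 - l2)) by (apply Rabs_pos_lt; lra).
  destruct (H (Rabs (l1 - l2) / 2)) as [y [H1 H2]]; [lra|].
  assert (Rabs (l1 - l2) <= Rabs (y - l1) + Rabs (y - l2)).
  { replace (l1 - l2) with (- (y - l1) + (y - l2)) by ring.
    rewrite <- (Rabs_Ropp (y - l1)). apply Rabs_triang. }
  lra.
Qed.

Lemma is_improper_int_open_unique (f : R -> R) (a b l1 l2 : R) : a < b ->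
  is_improper_int_open f a b l1 -> is_improper_int_open f a b l2 -> l1 = l2.
Proof.
  intros Hab H1 H2. apply eq_of_common_approximations. intros eps He.
  destruct (H1 eps He) as [d1 [Hd1 P1]]. destruct (H2 eps He) as [d2 [Hd2 P2]].
  set (d := Rmin (Rmin d1 d2) (b - a)).
  assert (Hd : 0 < d) by (unfold d; repeat apply Rmin_glb_lt; lra).
  assert (d <= d1 /\ d <= d2 /\ d <= b - a) as [? [? ?]].
  { unfold d. pose proof (Rmin_l (Rmin d1 d2) (b - a)).
    pose proof (Rmin_r (Rmin d1 d2) (b - a)).
    pose proof (Rmin_l d1 d2). pose proof (Rmin_r d1 d2). lra. }
  exists (Defs.RInt f (a + d / 2) (b - d / 2)). split.
  - apply (P1 (a + d / 2) (b - d / 2)); lra.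
  - apply (P2 (a + d / 2) (b - d / 2)); lra.
Qed.

Lemma is_improper_int_0inf_unique (f : R -> R) (l1 l2 : R) :
  is_improper_int_0inf f l1 -> is_improper_int_0inf f l2 -> l1 = l2.
Proof.
  intros H1 H2. apply eq_of_common_approximations. intros eps He.
  destruct (H1 eps He) as [d1 [M1 [Hd1 P1]]]. destruct (H2 eps He) as [d2 [M2 [Hd2 P2]]].
  set (u := Rmin d1 d2 / 2). set (v := Rmax M1 M2 + 1).
  assert (0 < u < d1 /\ u < d2) as [? ?].
  { unfold u. pose proof (Rmin_l d1 d2). pose proof (Rmin_r d1 d2).
    assert (0 < Rmin d1 d2) by (apply Rmin_glb_lt; lra). lra. }
  assert (M1 < v /\ M2 < v) as [? ?].
  { unfold v. pose proof (Rmax_l M1 M2). pose proof (Rmax_r M1 M2). lra. }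
  exists (Defs.RInt f u v). split; [apply (P1 u v)|apply (P2 u v)]; lra.
Qed.
Lemma continuity_pt_eps_delta (f : R -> R) (x0 : R) : continuity_pt f x0 ->
  forall eps, 0 < eps -> exists d, 0 < d /\
    forall x, Rabs (x - x0) < d -> Rabs (f x - f x0) < eps.
Proof.
  intros H eps He. destruct (H eps He) as [d [Hd Hx]].
  exists d; split; [assumption|]. intros x Hxx.
  destruct (Req_dec x x0) as [->|Hne].
  - rewrite Rminus_diag, Rabs_R0; assumption.
  - apply (Hx x). split; [split; [exact I|auto]|exact Hxx].
Qed.

Lemma is_improper_int_open_antiderivative (f G : R -> R) (a b : R) : a < b ->
  continuity_pt G a -> continuity_pt G b ->
  (forall u v, a < u -> u < v -> v < b -> is_RInt f u v (G v - G u)) ->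
  is_improper_int_open f a b (G b - G a).
Proof.
  intros Hab Ca Cb HI eps He.
  destruct (continuity_pt_eps_delta G a Ca (eps / 2)) as [da [Hda Ha]]; [lra|].
  destruct (continuity_pt_eps_delta G b Cb (eps / 2)) as [db [Hdb Hb]]; [lra|].
  set (d := Rmin (Rmin da db) ((b - a) / 2)).
  assert (d <= da /\ d <= db /\ d <= (b - a) / 2) as [? [? ?]].
  { unfold d. pose proof (Rmin_l (Rmin da db) ((b - a) / 2)).
    pose proof (Rmin_r (Rmin da db) ((b - a) / 2)).
    pose proof (Rmin_l da db). pose proof (Rmin_r da db). lra. }
  exists d. split; [unfold d; repeat apply Rmin_glb_lt; lra|].
  intros u v Hu Hv.
  destruct (is_RInt_Defs f u v (G v - G u)) as [Hi ->]; [apply HI; lra|].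
  split; [exact Hi|].
  assert (Au : Rabs (G u - G a) < eps / 2) by (apply Ha; rewrite Rabs_right; lra).
  assert (Av : Rabs (G v - G b) < eps / 2) by (apply Hb; rewrite Rabs_left; lra).
  apply Rabs_def2 in Au; apply Rabs_def2 in Av. apply Rabs_def1; lra.
Qed.

(* Improper integral over R of a function equal to [k] on [0,oo) and to [-k] on
   (-oo,0] (such as |x| g(x) with k x = x g(x)), given an antiderivative [Phi] of [k]
   with finite limits at both infinities. *)
Lemma is_improper_int_R_of_antiderivative (f k Phi : R -> R) (Lm Lp : R) :
  (forall x, is_derive Phi x (k x)) -> (forall x, continuous k x) ->
  (forall x, 0 <= x -> f x = k x) -> (forall x, x <= 0 -> f x = - k x) ->
  is_lim Phi m_infty Lm -> is_lim Phi p_infty Lp ->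
  is_improper_int_R f (Lm + Lp - 2 * Phi 0).
Proof.
  intros Hd Hc Hpos Hneg Hm Hp eps He.
  apply is_lim_spec in Hm, Hp.
  destruct (Hm (mkposreal (eps / 2) ltac:(lra))) as [Mm HMm].
  destruct (Hp (mkposreal (eps / 2) ltac:(lra))) as [Mp HMp]. simpl in HMm, HMp.
  set (M := Rmax (Rmax (- Mm) Mp) 0).
  assert (- Mm <= M /\ Mp <= M /\ 0 <= M) as [? [? ?]].
  { unfold M. pose proof (Rmax_l (Rmax (- Mm) Mp) 0). pose proof (Rmax_r (Rmax (- Mm) Mp) 0).
    pose proof (Rmax_l (- Mm) Mp). pose proof (Rmax_r (- Mm) Mp). lra. }
  exists M. intros u v Hu Hv.
  assert (Iright : is_RInt f 0 v (Phi v - Phi 0)).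
  { apply is_RInt_ext with k.
    - intros x Hx. rewrite Rmin_left in Hx by lra. symmetry; apply Hpos; lra.
    - apply is_RInt_antiderivative; auto. }
  assert (Ileft : is_RInt f u 0 ((fun x => - Phi x) 0 - (fun x => - Phi x) u)).
  { apply is_RInt_ext with (fun x => - k x).
    - intros x Hx. rewrite Rmax_right in Hx by lra. symmetry; apply Hneg; lra.
    - apply (is_RInt_antiderivative (fun x => - Phi x)).
      + intros x _. apply (is_derive_opp Phi); auto.
      + intros x _. apply (continuous_opp k); auto. }
  destruct (is_RInt_Defs _ _ _ _ (is_RInt_Chasles f u 0 v _ _ Ileft Iright))
    as [Hi ->].
  split; [exact Hi|]. simpl. unfold plus; simpl.
  assert (Au := HMm u ltac:(lra)). assert (Av := HMp v ltac:(lra)).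
  apply Rabs_def2 in Au; apply Rabs_def2 in Av. apply Rabs_def1; lra.
Qed.

Lemma is_lim_atan_p_infty : is_lim atan p_infty (PI / 2).
Proof.
  assert (Hinv : is_lim (fun y => / y) p_infty 0).
  { replace (Finite 0) with (Rbar_inv p_infty) by reflexivity.
    apply is_lim_inv; [apply is_lim_id|discriminate]. }
  assert (Hat0 : is_lim atan 0 0).
  { rewrite <- atan_0 at 2. apply is_lim_continuity, derivable_continuous_pt.
    exists (/ (1 + 0 ^ 2)). apply derivable_pt_lim_atan. }
  apply is_lim_ext_loc with (fun y => PI / 2 - atan (/ y)).
  { exists 0. intros y Hy. rewrite atan_inv by lra. ring. }
  eapply is_lim_minus; [apply is_lim_const| |].
  - apply (is_lim_comp atan (fun y => / y) p_infty 0 0 Hat0 Hinv).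
    exists 0. intros y Hy [= Hy0]. revert Hy0. apply Rinv_neq_0_compat. lra.
  - unfold is_Rbar_minus, is_Rbar_plus; simpl. rewrite Ropp_0, Rplus_0_r. reflexivity.
Qed.

Lemma is_lim_atan_m_infty : is_lim atan m_infty (- (PI / 2)).
Proof.
  apply is_lim_ext with (fun y => - atan (- y)); [intro y; rewrite atan_opp; ring|].
  apply (is_lim_opp _ _ (Finite (PI / 2))).
  apply (is_lim_comp atan (fun y => - y) m_infty (Finite (PI / 2)) p_infty).
  - apply is_lim_atan_p_infty.
  - apply (is_lim_opp (fun y => y) m_infty m_infty), is_lim_id.
  - exists 0. intros y _ H; discriminate H.
Qed.

Lemma is_lim_atan_affine (c d : R) : 0 < d ->
  is_lim (fun x => atan ((x - c) / d)) m_infty (- (PI / 2)) /\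
  is_lim (fun x => atan ((x - c) / d)) p_infty (PI / 2).
Proof.
  intro Hd.
  assert (Hlin : forall M y, (M * d + c < y -> M < (y - c) / d) /\
                             (y < M * d + c -> (y - c) / d < M)).
  { intros M y. split; intro Hy; apply (Rmult_lt_reg_r d); auto;
      unfold Rdiv; rewrite Rmult_assoc, Rinv_l; lra. }
  split.
  - apply (is_lim_comp atan _ m_infty _ m_infty); [apply is_lim_atan_m_infty| |].
    + apply is_lim_spec. intro M. exists (M * d + c). intros y Hy. apply Hlin, Hy.
    + exists 0. intros y _ H; discriminate H.
  - apply (is_lim_comp atan _ p_infty _ p_infty); [apply is_lim_atan_p_infty| |].
    + apply is_lim_spec. intro M. exists (M * d + c). intros y Hy. apply Hlin, Hy.
    + exists 0. intros y _ H; discriminate H.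
Qed.

Lemma is_lim_inv_1_plus_sq (x : Rbar) : x = m_infty \/ x = p_infty ->
  is_lim (fun y => / (1 + y ^ 2)) x 0.
Proof.
  intro Hx.
  assert (Hsq : is_lim (fun y => y * y) x p_infty).
  { destruct Hx as [-> | ->].
    - apply (is_lim_mult (fun y => y) (fun y => y) m_infty m_infty m_infty);
        [apply is_lim_id|apply is_lim_id|exact I].
    - apply (is_lim_mult (fun y => y) (fun y => y) p_infty p_infty p_infty);
        [apply is_lim_id|apply is_lim_id|exact I]. }
  replace (Finite 0) with (Rbar_inv p_infty) by reflexivity.
  apply is_lim_inv; [|discriminate].
  apply is_lim_ext with (fun y => 1 + y * y); [intro y; ring|].
  eapply is_lim_plus; [apply is_lim_const|exact Hsq|reflexivity].
Qed.

Lemma lub_approx (E : R -> Prop) (L eps : R) : is_lub E L -> 0 < eps ->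
  exists y, E y /\ L - eps < y.
Proof.
  intros [_ Hleast] He. apply Classical_Prop.NNPP. intro Hno.
  assert (Hub : is_upper_bound E (L - eps)).
  { intros y Hy. apply Rnot_lt_le. intro Hlt. apply Hno. exists y; auto. }
  specialize (Hleast _ Hub). lra.
Qed.

Lemma ex_RInt_pos_half_line (f : R -> R) (x y : R) :
  (forall t, 0 < t -> continuous f t) -> 0 < x -> 0 < y -> ex_RInt f x y.
Proof.
  intros Hc Hx Hy. apply (ex_RInt_continuous (V := R_CompleteNormedModule)).
  intros z Hz. apply Hc. assert (0 < Rmin x y) by (apply Rmin_glb_lt; lra). lra.
Qed.

Definition head_integrals (f : R -> R) (y : R) : Prop :=
  exists u, 0 < u <= 1 /\ y = RInt f u 1.
Definition tail_integrals (f : R -> R) (y : R) : Prop :=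
  exists v, 1 <= v /\ y = RInt f 1 v.

(* For f >= 0 continuous on (0,oo) the improper integral over (0,oo) is the sum of
   the suprema of the head and tail integrals, both being monotone in u and v. *)
Lemma is_improper_int_0inf_of_sups (f : R -> R) (LA LB : R) :
  (forall t, 0 < t -> continuous f t) -> (forall t, 0 < t -> 0 <= f t) ->
  is_lub (head_integrals f) LA -> is_lub (tail_integrals f) LB ->
  is_improper_int_0inf f (LA + LB).
Proof.
  intros Hc Hp HLA HLB eps He.
  assert (Hex : forall x y, 0 < x -> 0 < y -> ex_RInt f x y)
    by (intros; apply ex_RInt_pos_half_line; auto).
  assert (Hge : forall x y, 0 < x <= y -> 0 <= RInt f x y).
  { intros x y Hxy. apply RInt_ge_0; [lra|apply Hex; lra|].
    intros t Ht; apply Hp; lra. }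
  destruct (lub_approx _ LA (eps / 2) HLA) as [? [[u0 [Hu0 ->]] Au0]]; [lra|].
  destruct (lub_approx _ LB (eps / 2) HLB) as [? [[v0 [Hv0 ->]] Bv0]]; [lra|].
  exists u0, v0. split; [lra|]. intros u v Hu Hv.
  destruct (is_RInt_Defs f u v (RInt f u v)) as [Hi ->];
    [apply (RInt_correct (V := R_CompleteNormedModule)), Hex; lra|].
  split; [exact Hi|].
  assert (C1 := RInt_Chasles f u 1 v (Hex u 1 ltac:(lra) ltac:(lra))
                  (Hex 1 v ltac:(lra) ltac:(lra))).
  assert (C2 := RInt_Chasles f u u0 1 (Hex u u0 ltac:(lra) ltac:(lra))
                  (Hex u0 1 ltac:(lra) ltac:(lra))).
  assert (C3 := RInt_Chasles f 1 v0 v (Hex 1 v0 ltac:(lra) ltac:(lra))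
                  (Hex v0 v ltac:(lra) ltac:(lra))).
  unfold plus in C1, C2, C3; simpl in C1, C2, C3.
  assert (P2 := Hge u u0 ltac:(lra)). assert (P3 := Hge v0 v ltac:(lra)).
  assert (U1 : RInt f u 1 <= LA) by (apply HLA; exists u; split; [lra|reflexivity]).
  assert (U2 : RInt f 1 v <= LB) by (apply HLB; exists v; split; [lra|reflexivity]).
  apply Rabs_def1; lra.
Qed.

Lemma is_improper_int_0inf_pos (f : R -> R) (A B : R) :
  (forall t, 0 < t -> continuous f t) -> (forall t, 0 < t -> 0 < f t) ->
  (forall u, 0 < u <= 1 -> RInt f u 1 <= A) ->
  (forall v, 1 <= v -> RInt f 1 v <= B) ->
  exists L, 0 < L /\ is_improper_int_0inf f L.
Proof.
  intros Hc Hp HA HB.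
  destruct (completeness (head_integrals f)) as [LA HLA].
  { exists A. intros y [u [Hu ->]]. apply HA, Hu. }
  { exists (RInt f 1 1), 1. split; [lra|reflexivity]. }
  destruct (completeness (tail_integrals f)) as [LB HLB].
  { exists B. intros y [v [Hv ->]]. apply HB, Hv. }
  { exists (RInt f 1 1), 1. split; [lra|reflexivity]. }
  assert (LA0 : 0 <= LA).
  { replace 0 with (RInt f 1 1) by apply (RInt_point 1 f).
    apply HLA. exists 1. split; [lra|reflexivity]. }
  assert (LB0 : 0 < LB).
  { apply Rlt_le_trans with (RInt f 1 2).
    - apply RInt_gt_0; [lra|intros; apply Hp; lra|intros; apply Hc; lra].
    - apply HLB. exists 2. split; [lra|reflexivity]. }
  exists (LA + LB). split; [lra|].
  apply is_improper_int_0inf_of_sups; [exact Hc| |exact HLA|exact HLB].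
  intros t Ht. left. apply Hp, Ht.
Qed.

Definition gamma_integrand (a t : R) : R := Rpower t (a - 1) * exp (- t).

Lemma gamma_integrand_le_1 (a t : R) : 1 <= a -> 0 < t <= 1 -> gamma_integrand a t <= 1.
Proof.
  intros Ha Ht. unfold gamma_integrand, Rpower. rewrite <- exp_plus.
  assert (ln t <= 0) by (rewrite <- ln_1; apply ln_le; lra).
  assert (HX : (a - 1) * ln t + - t < 0) by nra.
  pose proof (exp_increasing _ _ HX) as Hexp. rewrite exp_0 in Hexp. lra.
Qed.

(* For a <= 3 the integrand is dominated by 16 exp(-t/2) on [1,oo), since t^2 <= 16 exp(t/2). *)
Lemma gamma_integrand_le_exp (a t : R) : 1 <= a <= 3 -> 1 <= t ->
  gamma_integrand a t <= 16 * exp (- t / 2).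
Proof.
  intros Ha Ht. unfold gamma_integrand.
  assert (Hpow : Rpower t (a - 1) <= t ^ 2).
  { rewrite <- (Rpower_pow 2 t) by lra. apply Rle_Rpower; [lra|]. simpl; lra. }
  assert (E1 : t / 4 < exp (t / 4)).
  { pose proof (exp_ineq1 (t / 4) ltac:(lra)). lra. }
  assert (E2 : exp (t / 2) = exp (t / 4) * exp (t / 4)) by (rewrite <- exp_plus; f_equal; lra).
  assert (E3 : exp (- t) = exp (- t / 2) * exp (- t / 2)) by (rewrite <- exp_plus; f_equal; lra).
  assert (E4 : exp (- t / 2) * exp (t / 2) = 1)
    by (rewrite <- exp_plus, <- exp_0; f_equal; lra).
  assert (0 < exp (- t / 2)) by apply exp_pos.
  assert (0 <= Rpower t (a - 1)) by (unfold Rpower; left; apply exp_pos).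
  assert (t ^ 2 <= 16 * exp (t / 2)) by (rewrite E2; nra).
  rewrite E3. nra.
Qed.

Lemma gamma_integrand_continuous (a t : R) : 0 < t -> continuous (gamma_integrand a) t.
Proof.
  intro Ht. apply (ex_derive_continuous (gamma_integrand a)).
  unfold gamma_integrand, Rpower. auto_derive. lra.
Qed.

Lemma gamma_integrand_int_head_le (a u : R) : 1 <= a -> 0 < u <= 1 ->
  RInt (gamma_integrand a) u 1 <= 1.
Proof.
  intros Ha Hu. apply Rle_trans with (RInt (fun _ => 1) u 1).
  - apply RInt_le; [lra| |apply ex_RInt_const|].
    + apply ex_RInt_pos_half_line; [apply gamma_integrand_continuous|lra|lra].
    + intros t Ht. apply gamma_integrand_le_1; lra.
  - rewrite RInt_const. unfold scal; simpl; unfold mult; simpl. lra.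
Qed.

Lemma gamma_integrand_int_tail_le (a v : R) : 1 <= a <= 3 -> 1 <= v ->
  RInt (gamma_integrand a) 1 v <= 32.
Proof.
  intros Ha Hv.
  assert (Hdom : is_RInt (fun t => 16 * exp (- t / 2)) 1 v
                   (- 32 * exp (- v / 2) - - 32 * exp (- (1) / 2))).
  { apply (is_RInt_antiderivative (fun t => - 32 * exp (- t / 2))).
    - intros t _. auto_derive; [exact I|lra].
    - intros t _. apply (ex_derive_continuous (fun t => 16 * exp (- t / 2))).
      auto_derive. exact I. }
  apply Rle_trans with (RInt (fun t => 16 * exp (- t / 2)) 1 v).
  - apply RInt_le; [lra| |eexists; exact Hdom|].
    + apply ex_RInt_pos_half_line; [apply gamma_integrand_continuous|lra|lra].
    + intros t Ht. apply gamma_integrand_le_exp; lra.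
  - rewrite (is_RInt_unique _ _ _ _ Hdom).
    assert (0 < exp (- v / 2)) by apply exp_pos.
    assert (exp (- (1) / 2) < exp 0) by (apply exp_increasing; lra).
    rewrite exp_0 in *. lra.
Qed.

(* Gamma is positive on [1,3], the range of arguments occurring for nu = 3. *)
Lemma Gamma_pos (a : R) : 1 <= a <= 3 -> 0 < Gamma a.
Proof.
  intro Ha.
  assert (Hp : forall t, 0 < t -> 0 < gamma_integrand a t)
    by (intros; apply Rmult_lt_0_compat; apply exp_pos).
  destruct (is_improper_int_0inf_pos (gamma_integrand a) 1 32
              (gamma_integrand_continuous a) Hp) as [L [HL HI]].
  - intros u Hu. apply gamma_integrand_int_head_le; lra.
  - intros v Hv. apply gamma_integrand_int_tail_le; lra.
  - unfold Gamma. fold (gamma_integrand a).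
    assert (E := epsilon_spec (inhabits 0) (is_improper_int_0inf (gamma_integrand a))
                   (ex_intro _ L HI)).
    rewrite (is_improper_int_0inf_unique _ _ _ E HI). exact HL.
Qed.

Definition student3_const : R :=
  Gamma ((3 + 1) / 2) / (sqrt (3 * PI) * Gamma (3 / 2)).
Definition fisher42_const : R := 2 / Beta ((3 + 1) / 2) ((3 - 1) / 2).

Lemma p_t_3 (t : R) : p_t t 3 = student3_const / (1 + t ^ 2 / 3) ^ 2.
Proof.
  unfold p_t, student3_const. replace (- (3 + 1) / 2) with (- INR 2) by (simpl; field).
  rewrite Rpower_Ropp, Rpower_pow; [unfold Rdiv; ring|].
  assert (0 <= t ^ 2) by apply pow2_ge_0. lra.
Qed.

Lemma F_pdf_4_2 (s : R) : 0 < s ->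
  F_pdf (3 + 1) (3 - 1) s = fisher42_const * (2 * s / (1 + 2 * s) ^ 3).
Proof.
  intro Hs. unfold F_pdf, fisher42_const.
  replace (Rpower ((3 + 1) / (3 - 1)) ((3 + 1) / 2)) with 4.
  2:{ replace ((3 + 1) / (3 - 1)) with 2 by field.
      replace ((3 + 1) / 2) with (INR 2) by (simpl; field).
      rewrite Rpower_pow by lra. simpl; ring. }
  replace ((3 + 1) / 2 - 1) with 1 by field. rewrite Rpower_1 by exact Hs.
  replace (- (3 + 1 + (3 - 1)) / 2) with (- INR 3) by (simpl; field).
  replace (1 + (3 + 1) * s / (3 - 1)) with (1 + 2 * s) by field.
  rewrite Rpower_Ropp, Rpower_pow by lra. unfold Rdiv. ring.
Qed.

(* The F(4,2) distribution function, with antiderivative x^2/(1+2x)^2 of 2x/(1+2x)^3. *)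
Lemma P_F_4_2 (x : R) : 0 < x ->
  P_F x (3 + 1) (3 - 1) = fisher42_const * (x ^ 2 / (1 + 2 * x) ^ 2).
Proof.
  intro Hx. unfold P_F. destruct (Rle_dec x 0) as [|_]; [lra|].
  set (G := fun s => fisher42_const * (s ^ 2 / (1 + 2 * s) ^ 2)).
  assert (HG : forall s, 0 <= s -> continuity_pt G s).
  { intros s Hs. apply continuity_pt_filterlim, (ex_derive_continuous G).
    unfold G. auto_derive. nra. }
  assert (HI : is_improper_int_open (F_pdf (3 + 1) (3 - 1)) 0 x (G x - G 0)).
  { apply is_improper_int_open_antiderivative; [exact Hx|apply HG; lra|apply HG; lra|].
    intros u v Hu Huv Hv.
    apply is_RInt_ext with (fun s => fisher42_const * (2 * s / (1 + 2 * s) ^ 3)).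
    - intros s Hs. rewrite Rmin_left in Hs by lra. symmetry; apply F_pdf_4_2; lra.
    - apply is_RInt_antiderivative; intros s Hs; rewrite Rmin_left in Hs by lra.
      + unfold G. auto_derive; [nra|field; nra].
      + apply (ex_derive_continuous (fun s => fisher42_const * (2 * s / (1 + 2 * s) ^ 3))).
        auto_derive. nra. }
  assert (E := epsilon_spec (inhabits 0) (is_improper_int_open (F_pdf (3 + 1) (3 - 1)) 0 x)
                 (ex_intro _ _ HI)).
  rewrite (is_improper_int_open_unique _ _ _ _ _ Hx E HI). unfold G.
  replace (0 ^ 2) with 0 by ring. unfold Rdiv. ring.
Qed.

Lemma affine_pos_between (al be a b t : R) : 0 < al + be * a -> 0 < al + be * b ->
  Rmin a b <= t <= Rmax a b -> 0 < al + be * t.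
Proof.
  intros Ha Hb Ht. destruct (Rle_dec a b) as [Hab|Hab].
  - rewrite Rmin_left, Rmax_right in Ht by lra.
    destruct (Req_dec a b) as [<-|Hne]; [replace t with a by lra; exact Ha|].
    assert (0 < (b - a) * (al + be * t)); [|nra].
    replace ((b - a) * (al + be * t))
      with ((b - t) * (al + be * a) + (t - a) * (al + be * b)) by ring.
    destruct (Req_dec t b) as [->|]; nra.
  - rewrite Rmin_right, Rmax_left in Ht by lra.
    assert (0 < (a - b) * (al + be * t)); [|nra].
    replace ((a - b) * (al + be * t))
      with ((a - t) * (al + be * b) + (t - b) * (al + be * a)) by ring.
    destruct (Req_dec t a) as [->|]; nra.
Qed.

Lemma is_RInt_inv_sq_affine (c al be a b : R) : 0 < al + be * a -> 0 < al + be * b ->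
  is_RInt (fun t => c / (al + be * t) ^ 2) a b
    (c * (b - a) / ((al + be * a) * (al + be * b))).
Proof.
  intros Ha Hb.
  set (F := fun t => c * (t - a) / ((al + be * a) * (al + be * t))).
  replace (c * (b - a) / ((al + be * a) * (al + be * b))) with (F b - F a)
    by (unfold F; field; lra).
  apply is_RInt_antiderivative; intros t Ht;
    pose proof (affine_pos_between al be a b t Ha Hb Ht).
  - unfold F. auto_derive; [nra|field; lra].
  - apply (ex_derive_continuous (fun t => c / (al + be * t) ^ 2)). auto_derive. nra.
Qed.

(* For nu = 3 both endpoints t_-, t_+ are multiples of m = sqrt 3 / sqrt (1 - rho^2). *)
Definition tscale (rho : R) : R := sqrt 3 / sqrt (1 - rho ^ 2).

Lemma tscale_pos (rho : R) : -1 < rho < 1 -> 0 < tscale rho.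
Proof.
  intro Hr. unfold tscale. apply Rdiv_lt_0_compat; apply sqrt_lt_R0; nra.
Qed.

Lemma tscale_sq (rho : R) : -1 < rho < 1 -> tscale rho ^ 2 * (1 - rho ^ 2) = 3.
Proof.
  intro Hr. unfold tscale, Rdiv. rewrite Rpow_mult_distr, pow_inv, !pow2_sqrt by nra.
  field. nra.
Qed.

Lemma t_minus_3 (rho : R) : -1 < rho < 1 -> t_minus 3 rho = - tscale rho * rho.
Proof.
  intro Hr. assert (0 < sqrt (1 - rho ^ 2)) by (apply sqrt_lt_R0; nra).
  unfold t_minus, tscale. field. lra.
Qed.

Lemma t_plus_3 (bt rho : R) : -1 < rho < 1 -> t_plus bt 3 rho = tscale rho * (bt - rho).
Proof.
  intro Hr. assert (0 < sqrt (1 - rho ^ 2)) by (apply sqrt_lt_R0; nra).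
  unfold t_plus, tscale. field. lra.
Qed.

Definition I_const : R := 9 * student3_const * fisher42_const / 4.

(* For nu = 3 the integrand of I is I_const / (al + be t)^2 on (t_-, t_+): the
   denominator D of the F statistic satisfies D + 3 + t^2 = al + be t. *)
Lemma I_integrand_3 (bt rho t : R) : -1 < rho < 1 ->
  t_minus 3 rho < t < t_plus bt 3 rho ->
  p_t t 3 * P_F (Fstat t bt 3 rho) (3 + 1) (3 - 1)
  = I_const / (tscale rho ^ 2 * (bt ^ 2 + 1 - 2 * rho ^ 2) - 2 * tscale rho * rho * t) ^ 2.
Proof.
  intros Hr Ht.
  assert (Hm2 := tscale_sq rho Hr).
  rewrite t_minus_3, t_plus_3 in * by exact Hr.
  set (m := tscale rho) in *.
  set (D := (m * (bt - rho) - - m * rho) ^ 2 - (t - - m * rho) ^ 2).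
  assert (HD : 0 < D).
  { unfold D. replace ((m * (bt - rho) - - m * rho) ^ 2 - (t - - m * rho) ^ 2)
      with ((m * (bt - rho) - t) * (m * (bt - rho) + t + 2 * m * rho)) by ring.
    apply Rmult_lt_0_compat; lra. }
  assert (HL : D + 3 + t ^ 2
               = m ^ 2 * (bt ^ 2 + 1 - 2 * rho ^ 2) - 2 * m * rho * t).
  { unfold D. rewrite <- Hm2 at 1. ring. }
  assert (0 <= t ^ 2) by apply pow2_ge_0.
  unfold Fstat. rewrite t_minus_3, t_plus_3 by exact Hr. fold m. fold D.
  rewrite P_F_4_2, p_t_3; [|apply Rdiv_lt_0_compat; [lra|exact HD]].
  unfold I_const. rewrite <- HL. clearbody D. field. repeat split; lra.
Qed.

Lemma I_fun_3 (bt rho : R) : 0 <= bt -> -1 < rho < 1 ->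
  I_fun bt 3 rho
  = I_const / tscale rho ^ 3 * (bt / ((bt ^ 2 + 1) * (bt ^ 2 - 2 * rho * bt + 1))).
Proof.
  intros Hbt Hr.
  assert (Hm := tscale_pos rho Hr). assert (Hm2 := tscale_sq rho Hr).
  set (al := tscale rho ^ 2 * (bt ^ 2 + 1 - 2 * rho ^ 2)).
  set (be := - 2 * tscale rho * rho).
  assert (Pa : 0 < al + be * t_minus 3 rho).
  { rewrite t_minus_3 by exact Hr. unfold al, be.
    replace (tscale rho ^ 2 * (bt ^ 2 + 1 - 2 * rho ^ 2)
             + - 2 * tscale rho * rho * (- tscale rho * rho))
      with (tscale rho ^ 2 * (bt ^ 2 + 1)) by ring.
    apply Rmult_lt_0_compat; nra. }
  assert (Pb : 0 < al + be * t_plus bt 3 rho).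
  { rewrite t_plus_3 by exact Hr. unfold al, be.
    replace (tscale rho ^ 2 * (bt ^ 2 + 1 - 2 * rho ^ 2)
             + - 2 * tscale rho * rho * (tscale rho * (bt - rho)))
      with (tscale rho ^ 2 * ((bt - rho) ^ 2 + (1 - rho ^ 2))) by ring.
    assert (0 <= (bt - rho) ^ 2) by apply pow2_ge_0.
    apply Rmult_lt_0_compat; nra. }
  assert (HI := is_RInt_inv_sq_affine I_const al be _ _ Pa Pb).
  apply is_RInt_ext with (g := fun t => p_t t 3 * P_F (Fstat t bt 3 rho) (3 + 1) (3 - 1))
    in HI.
  2:{ intros t Ht. assert (t_minus 3 rho <= t_plus bt 3 rho).
      { rewrite t_minus_3, t_plus_3 by exact Hr. nra. }
      rewrite Rmin_left, Rmax_right in Ht by lra.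
      rewrite I_integrand_3 by lra. unfold al, be. f_equal. f_equal. ring. }
  unfold I_fun. rewrite (proj2 (is_RInt_Defs _ _ _ _ HI)).
  rewrite t_minus_3, t_plus_3 in * by exact Hr. unfold al, be in *.
  assert (0 <= (bt - rho) ^ 2) by apply pow2_ge_0.
  field. repeat split; nra.
Qed.

Definition J_const (r : R) : R := I_const / tscale r ^ 3.

Lemma sgn_sq_abs (b : R) : b <> 0 -> sgn b * sgn b = 1 /\ sgn b * Rabs b = b.
Proof.
  intro Hb. unfold sgn. destruct (Rlt_dec 0 b).
  - rewrite Rabs_right by lra. split; ring.
  - destruct (Rlt_dec b 0); [|lra]. rewrite Rabs_left by lra. split; ring.
Qed.

(* Closed form of J for nu = 3 and l = 1: with rho = r sgn b, the two terms I(|b|) and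
   I(1/|b|) add up since x/((x^2+1)(x^2 - 2 rho x + 1)) is invariant under x -> 1/x. *)
Lemma J_fun_3 (r b : R) : -1 < r < 1 ->
  J_fun b 3 r 1 = J_const r * (Rabs b / (b ^ 2 - 2 * r * b + 1)).
Proof.
  intro Hr. unfold J_fun, J_const.
  destruct (Req_dec b 0) as [->|Hb].
  { rewrite Rabs_R0. unfold sgn. destruct (Rlt_dec 0 0); [lra|].
    destruct (Rlt_dec 0 0); [lra|]. rewrite Rmult_0_r.
    replace (0 / 1) with 0 by field. replace (1 / 0) with 0 by (unfold Rdiv; rewrite Rinv_0; ring).
    rewrite I_fun_3 by lra. unfold Rdiv; ring. }
  destruct (sgn_sq_abs b Hb) as [Hs1 Hs2].
  set (rho := r * sgn b).
  assert (Hrho2 : rho ^ 2 = r ^ 2).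
  { unfold rho. replace ((r * sgn b) ^ 2) with (r ^ 2 * (sgn b * sgn b)) by ring.
    rewrite Hs1; ring. }
  assert (Hrho : -1 < rho < 1) by (split; nra).
  assert (Hx : 0 < Rabs b) by (apply Rabs_pos_lt; exact Hb).
  rewrite !I_fun_3 by (try apply Rlt_le, Rdiv_lt_0_compat; lra).
  replace (tscale rho) with (tscale r) by (unfold tscale; rewrite Hrho2; reflexivity).
  assert (Hrb : rho * Rabs b = r * b) by (unfold rho; rewrite Rmult_assoc, Hs2; ring).
  assert (Hb2 : Rabs b ^ 2 = b ^ 2) by apply pow2_abs.
  assert (HQ : 0 < b ^ 2 - 2 * r * b + 1).
  { assert (0 <= (b - r) ^ 2) by apply pow2_ge_0. nra. }
  assert (Hm := tscale_pos r Hr).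
  set (x := Rabs b) in *.
  replace ((x / 1) ^ 2 - 2 * rho * (x / 1) + 1) with (b ^ 2 - 2 * r * b + 1)
    by (rewrite <- Hb2; unfold Rdiv; rewrite Rinv_1, !Rmult_1_r; lra).
  replace ((1 / x) ^ 2 - 2 * rho * (1 / x) + 1) with ((b ^ 2 - 2 * r * b + 1) / x ^ 2)
    by (replace (b ^ 2 - 2 * r * b + 1) with (x ^ 2 - 2 * (rho * x) + 1)
          by (rewrite Hrb, Hb2; ring); field; lra).
  field. rewrite Hb2. repeat split; nra.
Qed.

Lemma posterior_numerator (r x : R) : -1 < r < 1 ->
  p_C x * J_fun x 3 r 1
  = / PI * J_const r * (Rabs x / ((1 + x ^ 2) * (x ^ 2 - 2 * r * x + 1))).
Proof.
  intro Hr. rewrite J_fun_3 by exact Hr. unfold p_C.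
  assert (0 <= (x - r) ^ 2) by apply pow2_ge_0. assert (0 <= x ^ 2) by apply pow2_ge_0.
  field. repeat split; [nra|lra|apply PI_neq0].
Qed.

(* J_const is positive because the Gamma values involved are. *)
Lemma J_const_pos (r : R) : -1 < r < 1 -> 0 < J_const r.
Proof.
  intro Hr. unfold J_const, I_const, student3_const, fisher42_const, Beta.
  assert (0 < Gamma ((3 + 1) / 2)) by (apply Gamma_pos; lra).
  assert (0 < Gamma (3 / 2)) by (apply Gamma_pos; lra).
  assert (0 < Gamma ((3 - 1) / 2)) by (apply Gamma_pos; lra).
  assert (0 < Gamma ((3 + 1) / 2 + (3 - 1) / 2)) by (apply Gamma_pos; lra).
  assert (0 < sqrt (3 * PI)) by (apply sqrt_lt_R0; pose proof PI_RGT_0; lra).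
  apply Rdiv_lt_0_compat; [|apply pow_lt, tscale_pos, Hr].
  repeat (apply Rmult_lt_0_compat || apply Rdiv_lt_0_compat || apply Rinv_0_lt_compat);
    auto; lra.
Qed.

(* A(r) = atan (r / sqrt (1 - r^2)) / (r sqrt (1 - r^2)), extended by A(0) = 1; it is
   both the normalizing integral (up to J_const r / PI) and the value of 2F1(1,1;3/2;r^2). *)
Definition arc_ratio (r : R) : R :=
  if Req_EM_T r 0 then 1 else atan (r / sqrt (1 - r ^ 2)) / (r * sqrt (1 - r ^ 2)).

(* For r <> 0, partial fractions: x/((1+x^2)((x-r)^2+q^2)) = (1/((x-r)^2+q^2) - 1/(1+x^2))/(2r). *)
Lemma normalizing_integral_nonzero (r : R) : -1 < r < 1 -> r <> 0 ->
  is_improper_int_R (fun x => p_C x * J_fun x 3 r 1) (/ PI * J_const r * arc_ratio r).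
Proof.
  intros Hr Hr0.
  unfold arc_ratio. destruct (Req_EM_T r 0) as [|_]; [contradiction|].
  set (q := sqrt (1 - r ^ 2)).
  assert (Hq : 0 < q) by (apply sqrt_lt_R0; nra).
  assert (Hq2 : q ^ 2 = 1 - r ^ 2) by (apply pow2_sqrt; nra).
  set (c := / PI * J_const r / (2 * r)).
  set (k := fun x => c * (1 / ((x - r) ^ 2 + q ^ 2) - 1 / (1 + x ^ 2))).
  set (Phi := fun x => c * (/ q * atan ((x - r) / q) - atan x)).
  assert (Hpos : forall x, 0 < (x - r) ^ 2 + q ^ 2)
    by (intro x; assert (0 <= (x - r) ^ 2) by apply pow2_ge_0; nra).
  assert (Hpos2 : forall x, 0 < 1 + x ^ 2)
    by (intro x; assert (0 <= x ^ 2) by apply pow2_ge_0; nra).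
  destruct (is_lim_atan_affine r q Hq) as [Am Ap].
  assert (Lm : is_lim Phi m_infty (c * (/ q * - (PI / 2) - - (PI / 2)))).
  { apply (is_lim_scal_l _ c m_infty (/ q * - (PI / 2) - - (PI / 2))).
    apply is_lim_minus'; [|apply is_lim_atan_m_infty].
    apply (is_lim_scal_l _ (/ q) m_infty (- (PI / 2))), Am. }
  assert (Lp : is_lim Phi p_infty (c * (/ q * (PI / 2) - PI / 2))).
  { apply (is_lim_scal_l _ c p_infty (/ q * (PI / 2) - PI / 2)).
    apply is_lim_minus'; [|apply is_lim_atan_p_infty].
    apply (is_lim_scal_l _ (/ q) p_infty (PI / 2)), Ap. }
  replace (/ PI * J_const r * (atan (r / q) / (r * q)))
    with (c * (/ q * - (PI / 2) - - (PI / 2)) + c * (/ q * (PI / 2) - PI / 2) - 2 * Phi 0).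
  2:{ unfold Phi, c. rewrite atan_0. replace ((0 - r) / q) with (- (r / q)) by (field; lra).
      rewrite atan_opp. field. repeat split; try lra; apply PI_neq0. }
  apply (is_improper_int_R_of_antiderivative _ k Phi); [| | | |exact Lm|exact Lp].
  - intro x. unfold Phi, k. auto_derive.
    + repeat split; auto; specialize (Hpos2 x); lra.
    + specialize (Hpos x); specialize (Hpos2 x). field. repeat split; lra.
  - intro x. apply (ex_derive_continuous k). unfold k. auto_derive.
    specialize (Hpos x); specialize (Hpos2 x). repeat split; lra.
  - intros x Hx. rewrite posterior_numerator, Rabs_right by lra. unfold k, c.
    specialize (Hpos x); specialize (Hpos2 x).
    replace ((x - r) ^ 2 + q ^ 2) with (x ^ 2 - 2 * r * x + 1) in * by (rewrite Hq2; ring).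
    field. repeat split; try lra; apply PI_neq0.
  - intros x Hx. rewrite posterior_numerator, Rabs_left1 by lra. unfold k, c.
    specialize (Hpos x); specialize (Hpos2 x).
    replace ((x - r) ^ 2 + q ^ 2) with (x ^ 2 - 2 * r * x + 1) in * by (rewrite Hq2; ring).
    field. repeat split; try lra; apply PI_neq0.
Qed.

(* For r = 0 the integrand is a multiple of |x|/(1+x^2)^2; on x >= 0 it has the
   antiderivative -1/(2(1+x^2)). *)
Lemma normalizing_integral_zero :
  is_improper_int_R (fun x => p_C x * J_fun x 3 0 1) (/ PI * J_const 0 * arc_ratio 0).
Proof.
  unfold arc_ratio. destruct (Req_EM_T 0 0) as [_|]; [|contradiction].
  set (c := / PI * J_const 0).
  set (k := fun x => c * (x / (1 + x ^ 2) ^ 2)).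
  set (Phi := fun x => - c / 2 * / (1 + x ^ 2)).
  assert (Hpos2 : forall x, 0 < 1 + x ^ 2)
    by (intro x; assert (0 <= x ^ 2) by apply pow2_ge_0; nra).
  assert (Lm : is_lim Phi m_infty (- c / 2 * 0)).
  { apply (is_lim_scal_l _ (- c / 2) m_infty 0), is_lim_inv_1_plus_sq. left; reflexivity. }
  assert (Lp : is_lim Phi p_infty (- c / 2 * 0)).
  { apply (is_lim_scal_l _ (- c / 2) p_infty 0), is_lim_inv_1_plus_sq. right; reflexivity. }
  replace (c * 1) with (- c / 2 * 0 + - c / 2 * 0 - 2 * Phi 0) by (unfold Phi; field).
  apply (is_improper_int_R_of_antiderivative _ k Phi); [| | | |exact Lm|exact Lp].
  - intro x. unfold Phi, k. specialize (Hpos2 x). auto_derive; [lra|field; lra].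
  - intro x. apply (ex_derive_continuous k). unfold k. auto_derive.
    specialize (Hpos2 x). simpl in Hpos2. rewrite Rmult_1_r.
    apply Rmult_integral_contrapositive_currified; lra.
  - intros x Hx. rewrite posterior_numerator, Rabs_right by lra. unfold k, c.
    specialize (Hpos2 x). field. repeat split; try lra; apply PI_neq0.
  - intros x Hx. rewrite posterior_numerator, Rabs_left1 by lra. unfold k, c.
    specialize (Hpos2 x). field. repeat split; try lra; apply PI_neq0.
Qed.

Lemma normalizing_integral (r : R) : -1 < r < 1 ->
  is_improper_int_R (fun x => p_C x * J_fun x 3 r 1) (/ PI * J_const r * arc_ratio r).
Proof.
  intro Hr. destruct (Req_dec r 0) as [->|Hr0].
  - exact normalizing_integral_zero.
  - exact (normalizing_integral_nonzero r Hr Hr0).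
Qed.

(* Wallis-type integrals w_n = int_0^1 (1 - u^2)^n du; the terms of 2F1(1,1;3/2;z)
   are w_n z^n. *)
Definition wallis (n : nat) : R := RInt (fun u => (1 - u ^ 2) ^ n) 0 1.

Lemma is_RInt_wallis (n : nat) : is_RInt (fun u => (1 - u ^ 2) ^ n) 0 1 (wallis n).
Proof.
  apply (RInt_correct (V := R_CompleteNormedModule)).
  apply (ex_RInt_continuous (V := R_CompleteNormedModule)). intros u _.
  apply (ex_derive_continuous (fun u => (1 - u ^ 2) ^ n)). auto_derive. exact I.
Qed.

(* Integration by parts, in the form
   (u (1-u^2)^(n+1))' = (2n+3)(1-u^2)^(n+1) - (2n+2)(1-u^2)^n. *)
Lemma wallis_rec (n : nat) : (2 * INR n + 3) * wallis (S n) = (2 * INR n + 2) * wallis n.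
Proof.
  set (g := fun u => (2 * INR n + 3) * (1 - u ^ 2) ^ S n - (2 * INR n + 2) * (1 - u ^ 2) ^ n).
  assert (I1 : is_RInt g 0 1 ((2 * INR n + 3) * wallis (S n) - (2 * INR n + 2) * wallis n)).
  { apply (is_RInt_minus (V := R_NormedModule)); apply (is_RInt_scal (V := R_NormedModule));
      apply is_RInt_wallis. }
  assert (I2 : is_RInt g 0 1 (1 * (1 - 1 ^ 2) ^ S n - 0 * (1 - 0 ^ 2) ^ S n)).
  { apply (is_RInt_antiderivative (fun u => u * (1 - u ^ 2) ^ S n)).
    - intros x _. unfold g. auto_derive; [exact I|].
      replace (match n with 0%nat => 1 | S _ => INR n + 1 end) with (INR n + 1)
        by (destruct n; simpl; ring).
      change ((1 - x ^ 2) ^ S n) with ((1 - x ^ 2) * (1 - x ^ 2) ^ n).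
      replace (1 + - (x * (x * 1))) with (1 - x ^ 2) by ring. ring.
    - intros x _. apply (ex_derive_continuous g). unfold g. auto_derive. exact I. }
  assert (E := is_RInt_unique g 0 1 _ I1). rewrite (is_RInt_unique g 0 1 _ I2) in E.
  simpl in E. lra.
Qed.

Lemma poch_3_2_pos (n : nat) : 0 < poch (3 / 2) n.
Proof.
  induction n as [|n IH]; simpl; [lra|].
  pose proof (pos_INR n). apply Rmult_lt_0_compat; lra.
Qed.

Lemma poch_1 (n : nat) : poch 1 n = INR (Factorial.fact n).
Proof.
  induction n as [|n IH]; [reflexivity|].
  simpl poch. rewrite IH, fact_simpl, mult_INR, S_INR. ring.
Qed.

Lemma wallis_closed_form (n : nat) : wallis n = INR (Factorial.fact n) / poch (3 / 2) n.
Proof.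
  induction n as [|n IH].
  - assert (I1 : is_RInt (fun _ : R => 1) 0 1 (1 - 0)).
    { apply (is_RInt_antiderivative (fun x => x)); intros.
      - auto_derive; [exact I|ring].
      - apply continuous_const. }
    transitivity (1 - 0); [exact (is_RInt_unique _ _ _ _ I1)|simpl; field].
  - pose proof (wallis_rec n) as Hrec. pose proof (poch_3_2_pos n). pose proof (pos_INR n).
    apply Rmult_eq_reg_l with (2 * INR n + 3); [|lra]. rewrite Hrec, IH.
    simpl poch. rewrite fact_simpl, mult_INR, S_INR. field. lra.
Qed.

Lemma hyp2F1_term_wallis (z : R) (n : nat) : hyp2F1_term 1 1 (3 / 2) z n = wallis n * z ^ n.
Proof.
  unfold hyp2F1_term. rewrite wallis_closed_form, !poch_1.
  pose proof (poch_3_2_pos n).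
  assert (0 < INR (Factorial.fact n)) by apply lt_0_INR, Factorial.lt_O_fact.
  field. lra.
Qed.

Lemma is_RInt_partial_sums (z : R) (N : nat) :
  is_RInt (fun u => sum_f_R0 (fun i => z ^ i * (1 - u ^ 2) ^ i) N) 0 1
          (sum_f_R0 (fun n => wallis n * z ^ n) N).
Proof.
  induction N as [|N IH]; simpl.
  - replace (wallis 0 * 1) with (1 * wallis 0) by ring.
    apply (is_RInt_scal (V := R_NormedModule)), is_RInt_wallis.
  - replace (wallis (S N) * (z * z ^ N)) with (z ^ S N * wallis (S N)) by (simpl; ring).
    apply (is_RInt_plus (V := R_NormedModule)); [exact IH|].
    apply (is_RInt_scal (V := R_NormedModule)), is_RInt_wallis.
Qed.

(* The tail of the series after N terms is the integral of
   (z(1-u^2))^(N+1)/(1 - z(1-u^2)), hence lies in [0, z^(N+1)/(1-z)]. *)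
Lemma hyp2F1_tail_bound (z L : R) (N : nat) : 0 <= z < 1 ->
  is_RInt (fun u => / (1 - z * (1 - u ^ 2))) 0 1 L ->
  0 <= L - sum_f_R0 (fun n => wallis n * z ^ n) N <= z ^ S N / (1 - z).
Proof.
  intros Hz HI.
  set (g := fun u => (z * (1 - u ^ 2)) ^ S N / (1 - z * (1 - u ^ 2))).
  assert (Hw : forall u, 0 <= u <= 1 -> 0 <= z * (1 - u ^ 2) <= z).
  { intros u Hu. assert (0 <= u ^ 2 <= 1) by (split; [apply pow2_ge_0|nra]). split; nra. }
  assert (Hg : forall u, 0 <= u <= 1 ->
     / (1 - z * (1 - u ^ 2)) - sum_f_R0 (fun i => z ^ i * (1 - u ^ 2) ^ i) N = g u).
  { intros u Hu. destruct (Hw u Hu).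
    rewrite (sum_eq _ (fun i => (z * (1 - u ^ 2)) ^ i))
      by (intros; rewrite Rpow_mult_distr; reflexivity).
    rewrite tech3 by lra. unfold g. field. lra. }
  assert (Ig : is_RInt g 0 1 (L - sum_f_R0 (fun n => wallis n * z ^ n) N)).
  { apply is_RInt_ext with
      (fun u => / (1 - z * (1 - u ^ 2)) - sum_f_R0 (fun i => z ^ i * (1 - u ^ 2) ^ i) N).
    - intros u Hu. rewrite Rmin_left, Rmax_right in Hu by lra. apply Hg. lra.
    - apply (is_RInt_minus (V := R_NormedModule)); [exact HI|apply is_RInt_partial_sums]. }
  rewrite <- (is_RInt_unique g 0 1 _ Ig).
  assert (Eg : ex_RInt g 0 1) by (eexists; exact Ig).
  split.
  - apply RInt_ge_0; [lra|exact Eg|]. intros u Hu. destruct (Hw u ltac:(lra)).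
    apply Rmult_le_pos; [apply pow_le; lra|left; apply Rinv_0_lt_compat; lra].
  - apply Rle_trans with (RInt (fun _ => z ^ S N / (1 - z)) 0 1).
    + apply RInt_le; [lra|exact Eg|apply ex_RInt_const|].
      intros u Hu. destruct (Hw u ltac:(lra)).
      apply Rmult_le_compat; [apply pow_le; lra|left; apply Rinv_0_lt_compat; lra| |].
      * apply pow_incr; lra.
      * apply Rinv_le_contravar; lra.
    + rewrite RInt_const. unfold scal; simpl; unfold mult; simpl. lra.
Qed.

Lemma hyp2F1_integral (z L : R) : 0 <= z < 1 ->
  is_RInt (fun u => / (1 - z * (1 - u ^ 2))) 0 1 L ->
  infinite_sum (hyp2F1_term 1 1 (3 / 2) z) L.
Proof.
  intros Hz HI eps He.
  destruct (pow_lt_1_zero z ltac:(rewrite Rabs_right; lra) (eps * (1 - z)))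
    as [N0 HN0]; [apply Rmult_lt_0_compat; lra|].
  exists N0. intros n Hn.
  rewrite (sum_eq _ (fun n => wallis n * z ^ n)) by (intros; apply hyp2F1_term_wallis).
  unfold Rdist. pose proof (hyp2F1_tail_bound z L n Hz HI) as Htail.
  rewrite Rabs_minus_sym, Rabs_right by lra.
  assert (Hpow := HN0 (S n) ltac:(lia)).
  rewrite Rabs_right in Hpow by (apply Rle_ge, pow_le; lra).
  apply Rle_lt_trans with (z ^ S n / (1 - z)); [lra|].
  apply Rmult_lt_reg_r with (1 - z); [lra|].
  unfold Rdiv. rewrite Rmult_assoc, Rinv_l by lra. lra.
Qed.

(* The integral representation of 2F1(1,1;3/2;r^2) evaluates to A(r): for r <> 0,
   1 - r^2 (1 - u^2) = q^2 + r^2 u^2 with q = sqrt (1 - r^2), which integrates to an arctangent. *)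
Lemma is_RInt_hyp2F1_kernel (r : R) : -1 < r < 1 ->
  is_RInt (fun u => / (1 - r ^ 2 * (1 - u ^ 2))) 0 1 (arc_ratio r).
Proof.
  intro Hr. unfold arc_ratio. destruct (Req_EM_T r 0) as [->|Hr0].
  - apply is_RInt_ext with (fun _ => 1); [intros; simpl; field|].
    replace 1 with (1 - 0) at 2 by ring.
    apply (is_RInt_antiderivative (fun x => x)); intros.
    + auto_derive; [exact I|ring].
    + apply continuous_const.
  - set (q := sqrt (1 - r ^ 2)).
    assert (Hq : 0 < q) by (apply sqrt_lt_R0; nra).
    assert (Hq2 : q ^ 2 = 1 - r ^ 2) by (apply pow2_sqrt; nra).
    assert (Hp : forall u, 0 < q ^ 2 + r ^ 2 * u ^ 2).
    { intro u. assert (0 <= r ^ 2 * u ^ 2) by (apply Rmult_le_pos; apply pow2_ge_0). nra. }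
    apply is_RInt_ext with (fun u => / (q ^ 2 + r ^ 2 * u ^ 2));
      [intros u _; rewrite Hq2; f_equal; ring|].
    replace (atan (r / q) / (r * q))
      with (/ (r * q) * atan (r * 1 / q) - / (r * q) * atan (r * 0 / q)).
    2:{ replace (r * 0 / q) with 0 by (field; lra). rewrite atan_0, Rmult_1_r. field. lra. }
    apply (is_RInt_antiderivative (fun u => / (r * q) * atan (r * u / q))); intros x _.
    + specialize (Hp x). auto_derive; [split; lra|].
      field. replace ((r * x) ^ 2) with (r ^ 2 * x ^ 2) by ring. repeat split; lra.
    + apply (ex_derive_continuous (fun u => / (q ^ 2 + r ^ 2 * u ^ 2))).
      auto_derive. specialize (Hp x). lra.
Qed.

(* A(r) > 0 as the integral of a positive continuous function. *)
Lemma arc_ratio_pos (r : R) : -1 < r < 1 -> 0 < arc_ratio r.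
Proof.
  intro Hr.
  assert (Hpos : forall u, 0 <= u <= 1 -> 0 < 1 - r ^ 2 * (1 - u ^ 2)).
  { intros u Hu. assert (0 <= u ^ 2 <= 1) by (split; [apply pow2_ge_0|nra]).
    assert (0 <= r ^ 2 < 1) by (split; [apply pow2_ge_0|nra]). nra. }
  rewrite <- (is_RInt_unique _ _ _ _ (is_RInt_hyp2F1_kernel r Hr)).
  apply RInt_gt_0; [lra| |].
  - intros u Hu. apply Rinv_0_lt_compat, Hpos. lra.
  - intros u Hu. apply (ex_derive_continuous (fun u => / (1 - r ^ 2 * (1 - u ^ 2)))).
    auto_derive. specialize (Hpos u Hu). lra.
Qed.

(* 1/A(r) = r sqrt (1 - r^2) / asin r for r <> 0, since asin r = atan (r / sqrt (1 - r^2)). *)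
Lemma inv_arc_ratio (r : R) : -1 < r < 1 -> r <> 0 ->
  / arc_ratio r = r * sqrt (1 - r ^ 2) / asin r.
Proof.
  intros Hr Hr0. pose proof (arc_ratio_pos r Hr) as HA.
  unfold arc_ratio in *. destruct (Req_EM_T r 0) as [|_]; [contradiction|].
  rewrite asin_atan by exact Hr. replace (r²) with (r ^ 2) by (unfold Rsqr; ring).
  assert (Hq : 0 < sqrt (1 - r ^ 2)) by (apply sqrt_lt_R0; nra).
  assert (atan (r / sqrt (1 - r ^ 2)) <> 0).
  { intro Hat. rewrite Hat in HA. unfold Rdiv in HA. rewrite Rmult_0_l in HA. lra. }
  field. repeat split; lra.
Qed.

(* The posterior density: Z = (J_const r / PI) A(r), H = 2F1(1,1;3/2;r^2) = A(r). *)
Theorem mainTheorem7 (r : R) (hr : -1 < r < 1) :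
  exists Z H : R,
    is_improper_int_R (fun x => p_C x * J_fun x 3 r 1) Z /\ Z <> 0 /\
    infinite_sum (hyp2F1_term 1 1 (3 / 2) (r ^ 2)) H /\
    (r <> 0 -> / H = r * sqrt (1 - r ^ 2) / asin r) /\
    (r = 0 -> / H = 1) /\
    (forall b : R, b <> 0 ->
       p_C b * J_fun b 3 r 1 / Z
       = / H * (1 / (1 + b ^ 2)) * (Rabs b / (b ^ 2 - 2 * r * b + 1))).
Proof.
  pose proof (arc_ratio_pos r hr) as HA. pose proof (J_const_pos r hr) as HK.
  assert (HPI : 0 < / PI) by apply Rinv_0_lt_compat, PI_RGT_0.
  exists (/ PI * J_const r * arc_ratio r), (arc_ratio r).
  split; [exact (normalizing_integral r hr)|].
  split; [apply Rgt_not_eq, Rmult_lt_0_compat; [apply Rmult_lt_0_compat|]; assumption|].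
  split.
  { apply hyp2F1_integral; [split; [apply pow2_ge_0|nra]|].
    exact (is_RInt_hyp2F1_kernel r hr). }
  split; [exact (inv_arc_ratio r hr)|].
  split.
  { intros ->. unfold arc_ratio. destruct (Req_EM_T 0 0); [apply Rinv_1|contradiction]. }
  intros b Hb. rewrite posterior_numerator by exact hr.
  assert (0 < 1 + b ^ 2) by (pose proof (pow2_ge_0 b); lra).
  assert (0 < b ^ 2 - 2 * r * b + 1) by (pose proof (pow2_ge_0 (b - r)); nra).
  pose proof PI_RGT_0. field. repeat split; lra.
Qed.
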